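(* After any non-terminal history at which the chair has not (at any earlier history along it) missed an opportunity or taken a risk, there is a pair of distinct alternatives unranked by the current proto-ranking which can be offered without missing an opportunity or taking a risk.
   Context: Let $\mathcal{X}$ be a finite set of alternatives. A proto-ranking is an irreflexive and transitive binary relation on $\mathcal{X}$; a ranking is a total proto-ranking; a tournament is a total and asymmetric relation on $\mathcal{X}$. The chair has a fixed preference $\succ$, a ranking on $\mathcal{X}$. Interaction: starting from $R_0=\varnothing$, in each period $t\geq1$ with $R_{t-1}$ not total the chair offers a pair $\{x,y\}$ unranked by $R_{t-1}$, one of them wins, and $R_t$ is the transitive closure of $R_{t-1}\cup\{(\text{winner},\text{loser})\}$. A history is a finite sequence of (winner, loser) pairs arising this way, with associated current proto-ranking; it is non-terminal if that proto-ranking is not total. Errors: let $R$ be a non-total proto-ranking and $x\succ y$ alternatives unranked by $R$. Offering $\{x,y\}$ misses an opportunity at $R$ if there is $z$ with $x\succ z\succ y$ and neither $yRz$ nor $zRx$. Offering $\{x,y\}$ takes a risk at $R$ if there is $z$ with either (a) $z\succ y$, $xRz$ and not $yRz$, or (b) $x\succ z$, $zRy$ and not $zRx$. The chair has missed an opportunity or taken a risk at a history if some pair offered along it did so at the proto-ranking in force when it was offered. *)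

From mathcomp Require Import all_boot.
Set Implicit Arguments. Unset Strict Implicit. Unset Printing Implicit Defensive.

Section Defs.
Variable X : finType.

Definition irreflexive_rel (R : rel X) : Prop := forall x, ~~ R x x.
Definition transitive_rel (R : rel X) : Prop :=
  forall x y z, R x y -> R y z -> R x z.
Definition total_rel (R : rel X) : Prop :=
  forall x y, x != y -> R x y || R y x.
Definition asymmetric_rel (R : rel X) : Prop := forall x y, R x y -> ~~ R y x.

Definition proto_ranking (R : rel X) : Prop :=
  irreflexive_rel R /\ transitive_rel R.
Definition ranking (R : rel X) : Prop := proto_ranking R /\ total_rel R.

Definition unranked (R : rel X) (x y : X) : bool :=
  [&& x != y, ~~ R x y & ~~ R y x].

Definition tclosure (R : rel X) : rel X :=
  fun x y => [exists z, R x z && connect R z y].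

(* R_t = transitive closure of R_{t-1} U {(winner, loser)} *)
Definition step (R : rel X) (p : X * X) : rel X :=
  tclosure (fun a b => R a b || ((a, b) == p)).

Definition empty_rel : rel X := fun _ _ => false.

Definition after (R : rel X) (h : seq (X * X)) : rel X := foldl step R h.

Fixpoint legal_from (R : rel X) (h : seq (X * X)) : Prop :=
  match h with
  | [::] => True
  | p :: h' => unranked R p.1 p.2 /\ legal_from (step R p) h'
  end.

Definition history (h : seq (X * X)) : Prop := legal_from empty_rel h.
Definition current (h : seq (X * X)) : rel X := after empty_rel h.

(* Errors, for the chair's preference P, with x P y *)
Definition misses_opp_oriented (P R : rel X) (x y : X) : bool :=
  [exists z, [&& P x z, P z y, ~~ R y z & ~~ R z x]].
Definition takes_risk_oriented (P R : rel X) (x y : X) : bool :=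
  [exists z, [&& P z y, R x z & ~~ R y z] || [&& P x z, R z y & ~~ R z x]].

Definition misses_opp (P R : rel X) (a b : X) : bool :=
  if P a b then misses_opp_oriented P R a b else misses_opp_oriented P R b a.
Definition takes_risk (P R : rel X) (a b : X) : bool :=
  if P a b then takes_risk_oriented P R a b else takes_risk_oriented P R b a.

Definition bad_offer (P R : rel X) (a b : X) : bool :=
  misses_opp P R a b || takes_risk P R a b.

Fixpoint no_error_from (P R : rel X) (h : seq (X * X)) : Prop :=
  match h with
  | [::] => True
  | p :: h' => ~~ bad_offer P R p.1 p.2 /\ no_error_from P (step R p) h'
  end.

Definition no_error (P : rel X) (h : seq (X * X)) : Prop :=
  no_error_from P empty_rel h.

End Defs.

From mathcomp Require Import all_boot.
Set Implicit Arguments. Unset Strict Implicit. Unset Printing Implicit Defensive.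

(* Along an error-free history the current proto-ranking R stays bridged:
   whenever R ranks a above b although the chair prefers b to a, every
   alternative the chair places strictly between them is already ranked
   above b or below a.  Call an unranked pair x > y tight when every
   alternative strictly between them is ranked above x or below y; offering
   a tight pair misses no opportunity, and tight pairs exist (shrink an
   unranked pair to one with the fewest alternatives in between).  A tight
   pair with the most alternatives in between takes no risk either: through
   the bridging invariant a risk would produce a tight pair with a strictly
   larger gap.  Reversing both the preference and R exchanges the two kinds
   of risk, so only one of them needs an argument. *)

Section Relations.
Variable X : finType.
Implicit Types (R E S : rel X) (a b u v w : X).

Definition reflc R : rel X := fun u v => (u == v) || R u v.

Definition extend R a b : rel X := fun u v => R u v || reflc R u a && reflc R b v.

Lemma reflcW R u v : R u v -> reflc R u v.
Proof. by move=> Ruv; rewrite /reflc Ruv orbT. Qed.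

Lemma reflc_neq R u v : u != v -> reflc R u v = R u v.
Proof. by move/negbTE => nuv; rewrite /reflc nuv. Qed.

Lemma reflc_trans R u v w : transitive_rel R -> reflc R u v -> R v w -> R u w.
Proof. by move=> trR /orP[/eqP-> // | Ruv]; apply: trR. Qed.

Lemma trans_reflc R u v w : transitive_rel R -> R u v -> reflc R v w -> R u w.
Proof. by move=> trR Ruv /orP[/eqP<- // | Rvw]; apply: trR Ruv Rvw. Qed.

Lemma extend_trans R a b : transitive_rel R -> transitive_rel (extend R a b).
Proof.
move=> trR u v w /orP[Ruv | /andP[ua bv]] /orP[Rvw | /andP[va bw]].
- by rewrite /extend (trR _ _ _ Ruv Rvw).
- by rewrite /extend (reflcW (trans_reflc trR Ruv va)) bw orbT.
- by rewrite /extend ua (reflcW (reflc_trans trR bv Rvw)) orbT.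
- by rewrite /extend ua bw orbT.
Qed.

Lemma tclosure_min E S : subrel E S -> transitive_rel S -> subrel (tclosure E) S.
Proof.
move=> sES trS u v /existsP[z /andP[Euz /connectP[p pth ->]]].
move/sES: Euz; elim: p z pth => [|z' p IHp] z //= /andP[Ezz' pth] Suz.
exact: IHp pth (trS _ _ _ Suz (sES _ _ Ezz')).
Qed.

Lemma stepE R a b : transitive_rel R -> step R (a, b) =2 extend R a b.
Proof.
move=> trR u v; pose E u v := R u v || ((u, v) == (a, b)).
have Eab : E a b by rewrite /E eqxx orbT.
change (tclosure E u v = extend R a b u v); apply/idP/idP.
  apply: (tclosure_min _ (@extend_trans R a b trR)).
  by move=> {}u {}v /orP[Ruv | /eqP[-> ->]]; rewrite /extend ?Ruv // /reflc !eqxx orbT.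
case/orP=> [Ruv | /andP[ua bv]]; first by apply/existsP; exists v; rewrite /E Ruv connect0.
have Cbv : connect E b v.
  by case/orP: bv => [/eqP-> | Rbv]; [exact: connect0 | apply: connect1; rewrite /E Rbv].
apply/existsP; case/orP: ua => [/eqP-> | Rua]; first by exists b; rewrite Eab.
by exists a; rewrite /E Rua /= (connect_trans (connect1 Eab) Cbv).
Qed.

Lemma step_proto_ranking R a b : proto_ranking R -> unranked R a b ->
  proto_ranking (step R (a, b)).
Proof.
case=> irR trR /and3P[nab _ nRba]; split; last first.
  by move=> u v w; rewrite !stepE //; apply: extend_trans.
move=> u; rewrite stepE // /extend (negbTE (irR u)) /=; apply/negP => /andP[ua bu].
have Rba : R b a.
  case/orP: ua => [/eqP eua | Rua]; last exact: reflc_trans trR bu Rua.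
  by case/orP: bu => [/eqP ebu | Rbu]; [rewrite -eua ebu eqxx in nab | rewrite -eua].
by rewrite Rba in nRba.
Qed.

Lemma unrankedC R a b : unranked R a b = unranked R b a.
Proof. by rewrite /unranked eq_sym [~~ R b a && _]andbC. Qed.

Lemma not_total_unranked R : ~ total_rel R -> exists a b, unranked R a b.
Proof.
move=> ntot; case: (pickP [pred p : X * X | unranked R p.1 p.2]) => [[a b] Uab | none].
  by exists a, b.
case: ntot => a b nab; move: (none (a, b)); rewrite /= /unranked nab /=.
by move/negbT; rewrite negb_and !negbK.
Qed.

End Relations.

Section Errors.
Variables (X : finType) (P R : rel X).

Lemma misses_opp_orientedPn x y :
  reflect (forall z, P x z -> P z y -> R z x || R y z)
          (~~ misses_opp_oriented P R x y).
Proof.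
apply: (iffP existsPn) => [none z Pxz Pzy | fill z].
  by move: (none z); rewrite Pxz Pzy /= negb_and !negbK orbC.
by apply/and4P => -[Pxz Pzy /negP nRyz /negP nRzx]; case/orP: (fill z Pxz Pzy).
Qed.

Lemma takes_risk_orientedPn x y :
  reflect ((forall z, P z y -> R x z -> R y z) /\ (forall z, P x z -> R z y -> R z x))
          (~~ takes_risk_oriented P R x y).
Proof.
apply: (iffP existsPn) => [none | [no_a no_b] z].
  split=> z Pz Rz; move: (none z); rewrite negb_or Pz Rz /= => /andP[];
    by [move/negPn | move=> _ /negPn].
by apply/orP => -[/and3P[Pzy Rxz /negP[]] | /and3P[Pxz Rzy /negP[]]];
  [exact: no_a | exact: no_b].
Qed.

Lemma bad_offer_oriented x y : P x y ->
  bad_offer P R x y = misses_opp_oriented P R x y || takes_risk_oriented P R x y.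
Proof. by move=> Pxy; rewrite /bad_offer /misses_opp /takes_risk Pxy. Qed.

End Errors.

Section Preference.
Variables (X : finType) (P : rel X).
Hypotheses (irP : irreflexive_rel P) (trP : transitive_rel P) (toP : total_rel P).
Implicit Types (R : rel X) (a b c d u v w x y z : X).

Lemma pref_neq a b : P a b -> a != b.
Proof. by apply: contraTneq => ->; apply: irP. Qed.

Lemma pref_trichotomy a b : [\/ a = b, P a b | P b a].
Proof.
have [-> | nab] := eqVneq a b; first exact: Or31.
by case/orP: (toP nab) => Pab; [apply: Or32 | apply: Or33].
Qed.

Lemma bad_offerC R a b : bad_offer P R a b = bad_offer P R b a.
Proof.
rewrite /bad_offer /misses_opp /takes_risk.
case: (pref_trichotomy a b) => [-> // | Pab | Pba].
  by rewrite Pab; case: ifP => // Pba; case/negP: (irP a); apply: trP Pab Pba.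
by rewrite Pba; case: ifP => // Pab; case/negP: (irP a); apply: trP Pab Pba.
Qed.

Definition bridged R :=
  forall a b w, R a b -> P b a -> P b w -> P w a -> R w b || R a w.

Lemma bridged_step_winner_preferred R x y :
  transitive_rel R -> bridged R -> P x y -> ~~ bad_offer P R x y ->
  bridged (step R (x, y)).
Proof.
move=> trR brR Pxy; rewrite bad_offer_oriented // negb_or => /andP[].
move=> /misses_opp_orientedPn fill _ c d w; rewrite !stepE //.
case/orP=> [Rcd | /andP[cx yd]] Pdc Pdw Pwc.
  by case/orP: (brR c d w Rcd Pdc Pdw Pwc) => H; rewrite /extend H ?orbT.
have w_over_x : reflc R w x -> extend R x y w d by rewrite /extend yd andbT orbC => ->.
have y_over_w : reflc R y w -> extend R x y c w by rewrite /extend cx orbC => ->.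
case: (pref_trichotomy w x) => [ewx | Pwx | Pxw].
- by rewrite w_over_x // /reflc ewx eqxx.
- have Pdy := trP (trP Pdw Pwx) Pxy.
  have Ryd : R y d by rewrite -reflc_neq // eq_sym (pref_neq Pdy).
  case/orP: (brR y d w Ryd Pdy Pdw (trP Pwx Pxy)) => [Rwd | Ryw].
    by rewrite /extend Rwd.
  by rewrite y_over_w ?orbT // reflcW.
- case: (pref_trichotomy w y) => [ewy | Pwy | Pyw].
  + by rewrite y_over_w ?orbT // /reflc ewy eqxx.
  + by case/orP: (fill w Pxw Pwy) => /reflcW; [move/w_over_x -> | move/y_over_w ->; rewrite orbT].
  + have Pxc := trP Pxy (trP Pyw Pwc).
    have Rcx : R c x by rewrite -reflc_neq // eq_sym (pref_neq Pxc).
    case/orP: (brR c x w Rcx Pxc (trP Pxy Pyw) Pwc) => [Rwx | Rcw].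
      by rewrite w_over_x // reflcW.
    by rewrite /extend Rcw orbT.
Qed.

Lemma bridged_step_winner_dispreferred R x y :
  proto_ranking R -> bridged R -> unranked R x y -> P x y -> ~~ bad_offer P R x y ->
  bridged (step R (y, x)).
Proof.
case=> irR trR brR /and3P[_ nRxy _] Pxy.
rewrite bad_offer_oriented // negb_or => /andP[/misses_opp_orientedPn fill].
case/takes_risk_orientedPn => no_risk_a no_risk_b c d w; rewrite !stepE //.
have [Rcd _ Pdc Pdw Pwc | nRcd] := boolP (R c d).
  by case/orP: (brR c d w Rcd Pdc Pdw Pwc) => H; rewrite /extend H ?orbT.
rewrite /extend (negbTE nRcd) /= => /andP[cy xd] Pdc Pdw Pwc.
have edx : d = x.
  case/orP: xd => [/eqP-> // | Rxd]; exfalso.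
  case: (pref_trichotomy d y) => [edy | Pdy | Pyd].
  - by rewrite -edy Rxd in nRxy.
  - by rewrite (reflc_trans trR cy (no_risk_a d Pdy Rxd)) in nRcd.
  - have Pyc := trP Pyd Pdc.
    have Rcy : R c y by rewrite -reflc_neq // eq_sym (pref_neq Pyc).
    case: (pref_trichotomy x c) => [exc | Pxc | Pcx].
    + by rewrite exc Rcy in nRxy.
    + by rewrite (trR _ _ _ (no_risk_b c Pxc Rcy) Rxd) in nRcd.
    + by case/negP: (irP x); apply: trP Pxy (trP Pyc Pcx).
subst d.
have ecy : c = y.
  by case/orP: cy => [/eqP-> // | Rcy]; rewrite (no_risk_b c Pdc Rcy) in nRcd.
subst c.
by case/orP: (fill w Pdw Pwc) => H; rewrite H ?orbT.
Qed.

Lemma bridged_step R a b :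
  proto_ranking R -> bridged R -> unranked R a b -> ~~ bad_offer P R a b ->
  bridged (step R (a, b)).
Proof.
move=> prR brR Uab nbad; case/and3P: (Uab) => nab _ _.
case/orP: (toP nab) => [Pab | Pba].
  exact: bridged_step_winner_preferred (proj2 prR) brR Pab nbad.
by apply: bridged_step_winner_dispreferred; rewrite // 1?unrankedC 1?bad_offerC.
Qed.

Lemma after_proto_ranking_bridged R h :
  proto_ranking R -> bridged R -> legal_from R h -> no_error_from P R h ->
  proto_ranking (after R h) /\ bridged (after R h).
Proof.
elim: h R => [|[a b] h IHh] R prR brR //= [Uab Lh] [nbad Nh].
by apply: IHh Lh Nh; [apply: step_proto_ranking | apply: bridged_step].
Qed.

Definition gap x y := #|[set z | P x z && P z y]|.

Lemma gap_lt_left x' x y : P x' x -> P x y -> gap x y < gap x' y.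
Proof.
move=> Px'x Pxy; apply/proper_card/properP; split.
  by apply/subsetP => z; rewrite !inE => /andP[/(trP Px'x) -> ->].
by exists x; rewrite !inE ?Px'x ?Pxy // (negbTE (irP x)).
Qed.

Lemma gap_lt_right x y y' : P x y -> P y y' -> gap x y < gap x y'.
Proof.
move=> Pxy Pyy'; apply/proper_card/properP; split.
  by apply/subsetP => z; rewrite !inE => /andP[-> /trP->].
by exists y; rewrite !inE ?Pxy ?Pyy' // (negbTE (irP y)) andbF.
Qed.

Definition tight R x y := [&& P x y, unranked R x y & ~~ misses_opp_oriented P R x y].

Lemma exists_tight R : proto_ranking R -> ~ total_rel R -> exists x y, tight R x y.
Proof.
case=> irR trR /not_total_unranked[a [b Uab]].
pose ordered p := P p.1 p.2 && unranked R p.1 p.2.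
have [p0 ord_p0] : exists p0, ordered p0.
  case/and3P: (Uab) => /toP/orP[Pab | Pba] _ _; first by exists (a, b); rewrite /ordered Pab.
  by exists (b, a); rewrite /ordered Pba unrankedC.
case: (arg_minnP (fun p => gap p.1 p.2) ord_p0) => -[x y] /andP[/= Pxy Uxy] min_xy.
exists x, y; rewrite /tight Pxy Uxy; apply/misses_opp_orientedPn => z Pxz Pzy.
case/and3P: Uxy => _ nRxy _; apply/negPn/negP => /norP[nRzx nRyz].
have [Rxz | nRxz] := boolP (R x z).
- have /min_xy : ordered (z, y).
    rewrite /ordered /unranked /= Pzy pref_neq //= nRyz andbT.
    by apply: contra nRxy; apply: trR.
  by rewrite leqNgt gap_lt_left.
- have /min_xy : ordered (x, z) by rewrite /ordered /unranked /= Pxz pref_neq // nRxz.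
  by rewrite leqNgt gap_lt_right.
Qed.

Lemma max_tight_no_risk_a R x y :
  proto_ranking R -> bridged R -> tight R x y ->
  (forall x' y', tight R x' y' -> gap x' y' <= gap x y) ->
  forall z, P z y -> R x z -> R y z.
Proof.
case=> irR trR brR /and3P[Pxy /and3P[_ nRxy _] /misses_opp_orientedPn fill] max_xy.
move=> z Pzy Rxz; apply/negPn/negP => nRyz.
pose W v := [&& P v x, R x v & ~~ R y v].
have Wz : W z.
  rewrite /W Rxz nRyz !andbT; case: (pref_trichotomy x z) => [exz | Pxz | //].
    by move: (irR x); rewrite {2}exz Rxz.
  case/orP: (fill z Pxz Pzy) => [Rzx | Ryz]; last by rewrite Ryz in nRyz.
  by move: (irR x); rewrite (trR _ _ _ Rxz Rzx).
case: (arg_minnP (fun v => gap v x) Wz) => v /and3P[Pvx Rxv nRyv] min_v.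
have /max_xy : tight R v y.
  rewrite /tight /unranked (trP Pvx Pxy) pref_neq ?(trP Pvx Pxy) //= nRyv andbT.
  apply/andP; split; first by apply: contra nRxy; apply: trR.
  apply/misses_opp_orientedPn => w Pvw Pwy.
  case: (pref_trichotomy w x) => [-> | Pwx | Pxw]; first by rewrite Rxv.
  - case/orP: (brR x v w Rxv Pvx Pvw Pwx) => [-> // | Rxw].
    apply/orP; right; apply/negPn/negP => nRyw.
    have /min_v : W w by rewrite /W Pwx Rxw.
    by rewrite leqNgt gap_lt_left.
  - case/orP: (fill w Pxw Pwy) => [Rwx | ->]; last by rewrite orbT.
    by rewrite (trR _ _ _ Rwx Rxv).
by rewrite leqNgt gap_lt_left.
Qed.

End Preference.

Section Duality.
Variables (X : finType) (P R : rel X).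
Let P' : rel X := fun a b => P b a.
Let R' : rel X := fun a b => R b a.

Lemma gap_flip x y : gap P' y x = gap P x y.
Proof. by apply: eq_card => z; rewrite !inE andbC. Qed.

Lemma misses_opp_oriented_flip x y :
  misses_opp_oriented P' R' y x = misses_opp_oriented P R x y.
Proof.
by apply: eq_existsb => z; rewrite /P' /R' andbCA [~~ R z x && _]andbC.
Qed.

Lemma tight_flip x y : tight P' R' y x = tight P R x y.
Proof. by rewrite /tight misses_opp_oriented_flip /unranked /= eq_sym. Qed.

Lemma bridged_flip : bridged P R -> bridged P' R'.
Proof. by move=> brR a b w /= Rba Pab Pwb Paw; rewrite orbC; apply: brR. Qed.

Lemma proto_ranking_flip : proto_ranking R -> proto_ranking R'.
Proof. by case=> irR trR; split=> // u v w Rvu Rwv; apply: trR Rwv Rvu. Qed.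

Lemma ranking_flip : ranking R -> ranking R'.
Proof.
by case=> prR toR; split; [apply: proto_ranking_flip | move=> u v /toR; rewrite /R' orbC].
Qed.

End Duality.

Lemma max_tight_no_risk_b (X : finType) (P R : rel X) x y :
  ranking P -> proto_ranking R -> bridged P R -> tight P R x y ->
  (forall x' y', tight P R x' y' -> gap P x' y' <= gap P x y) ->
  forall z, P x z -> R z y -> R z x.
Proof.
move=> /ranking_flip[[irP' trP'] toP'] prR brR txy max_xy.
apply: (@max_tight_no_risk_a _ _ irP' trP' toP' _ y x (proto_ranking_flip prR) (bridged_flip brR)).
  by rewrite (@tight_flip _ P R x y).
move=> x' y'; rewrite (@tight_flip _ P R y') (@gap_flip _ P y') (@gap_flip _ P x).
exact: max_xy.
Qed.

Lemma exists_good_offer (X : finType) (P R : rel X) :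
  ranking P -> proto_ranking R -> bridged P R -> ~ total_rel R ->
  exists x y, unranked R x y /\ ~~ bad_offer P R x y.
Proof.
move=> rkP prR brR ntot; have [[irP trP] toP] := rkP.
have [x0 [y0 t0]] := exists_tight irP trP toP prR ntot.
have [[x y] /= txy max_xy] :=
  @arg_maxnP _ (x0, y0) [pred p | tight P R p.1 p.2] (fun p => gap P p.1 p.2) t0.
have max_xy' x' y' : tight P R x' y' -> gap P x' y' <= gap P x y by apply: (max_xy (x', y')).
case/and3P: (txy) => Pxy Uxy nmiss; exists x, y; split => //.
rewrite bad_offer_oriented // negb_or nmiss; apply/takes_risk_orientedPn; split.
  exact: (max_tight_no_risk_a irP trP toP prR brR txy max_xy').
exact: (max_tight_no_risk_b rkP prR brR txy max_xy').
Qed.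

Theorem proposition2 (X : finType) (P : rel X) :
  ranking P ->
  forall h : seq (X * X),
    history h ->
    ~ total_rel (current h) ->
    no_error P h ->
    exists x y : X,
      unranked (current h) x y /\ ~~ bad_offer P (current h) x y.
Proof.
move=> rkP h hist ntot nerr; have [[irP trP] toP] := rkP.
have [prR brR] : proto_ranking (current h) /\ bridged P (current h).
  by apply: (after_proto_ranking_bridged irP trP toP _ _ hist nerr).
exact: exists_good_offer rkP prR brR ntot.
Qed.
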